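(* Let $-1\le\alpha\le1$ and $t\ge0$. For all $(x,y)\in\mathbb{R}^2$ with $(x,y)\notin\{0\}\times2\pi\mathbb{Z}$, the function $t\mapsto W_{\alpha,t}(x,y)-\frac t2$ is non-increasing on $[0,\infty)$, equals $W_\alpha(x,y)$ at $t=0$, and consequently $$W_\alpha(x,y)\ \ge\ W_{\alpha,t}(x,y)-\frac t2\qquad\text{for all }t\ge0.$$
   Context: For $-1\le\alpha\le1$ and $(x,y)\in\mathbb{R}^2$ with $\cosh x-\cos y>0$, define $$W_\alpha(x,y)=\frac12\left[\frac{\alpha\,x\sinh x}{\cosh x-\cos y}-\log\big(2(\cosh x-\cos y)\big)+(1-\alpha)|x|\right],$$ and for $t\ge0$ and $(x,y)$ with $\cosh(|x|+t)-\cos y>0$, $$W_{\alpha,t}(x,y)=\frac{\alpha|x|\sinh(|x|+t)}{2(\cosh(|x|+t)-\cos y)}-\frac12\log\big(2(\cosh(|x|+t)-\cos y)\big)+\frac t2+\frac{1-\alpha}2|x|.$$ *)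

From Stdlib Require Import Reals.
Open Scope R_scope.

Definition W (alpha x y : R) : R :=
  / 2 * (alpha * x * sinh x / (cosh x - cos y)
         - ln (2 * (cosh x - cos y)) + (1 - alpha) * Rabs x).

Definition Wt (alpha t x y : R) : R :=
  alpha * Rabs x * sinh (Rabs x + t) / (2 * (cosh (Rabs x + t) - cos y))
  - / 2 * ln (2 * (cosh (Rabs x + t) - cos y))
  + t / 2 + (1 - alpha) / 2 * Rabs x.

Definition exceptional (x y : R) : Prop :=
  x = 0 /\ exists k : Z, y = 2 * PI * IZR k.

(** With [s = |x|] and [c = cos y] one has
    [W_{α,t}(x,y) - t/2 = φ(s + t) + (1-α) s/2] for
    [φ(u) = α s sinh u / (2 (cosh u - c)) - ln (2 (cosh u - c)) / 2].
    Off the exceptional set [cosh u - c > 0] for [u ≥ s], and there [φ' ≤ 0]: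
    its numerator is [α s (1 - c cosh u) - sinh u (cosh u - c)], and
    [|1 - c cosh u| ≤ cosh u - c] while [|α s| ≤ u ≤ sinh u].  So [φ] is
    nonincreasing on [[s, ∞)], and at [t = 0] evenness of [x ↦ x sinh x] and of
    [cosh] gives back [W_α]. *)

From Stdlib Require Import Reals Lra Psatz.
Open Scope R_scope.

Lemma cosh_sqr_sub_sinh_sqr (u : R) : cosh u * cosh u - sinh u * sinh u = 1.
Proof.
  unfold cosh, sinh; rewrite exp_Ropp.
  pose proof (exp_pos u); field; lra.
Qed.

Lemma cosh_pos (u : R) : 0 < cosh u.
Proof.
  unfold cosh; pose proof (exp_pos u); pose proof (exp_pos (- u)); lra.
Qed.

Lemma cosh_ge_1 (u : R) : 1 <= cosh u.
Proof.
  pose proof (cosh_sqr_sub_sinh_sqr u); pose proof (cosh_pos u).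
  nra.
Qed.

Lemma cosh_gt_1 (u : R) : 0 < u -> 1 < cosh u.
Proof.
  intro Hu.
  assert (Hsinh : 0 < sinh u) by (rewrite <- sinh_0; apply sinh_lt; exact Hu).
  pose proof (cosh_sqr_sub_sinh_sqr u); pose proof (cosh_pos u).
  nra.
Qed.

Lemma cosh_opp (u : R) : cosh (- u) = cosh u.
Proof. unfold cosh; rewrite Ropp_involutive, Rplus_comm; reflexivity. Qed.

Lemma sinh_opp (u : R) : sinh (- u) = - sinh u.
Proof. unfold sinh; rewrite Ropp_involutive; field. Qed.

Lemma cosh_Rabs (x : R) : cosh (Rabs x) = cosh x.
Proof.
  destruct (Rcase_abs x) as [Hx | Hx].
  - rewrite Rabs_left, cosh_opp by exact Hx; reflexivity.
  - rewrite Rabs_pos_eq by lra; reflexivity.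
Qed.

Lemma Rabs_mul_sinh_Rabs (x : R) : Rabs x * sinh (Rabs x) = x * sinh x.
Proof.
  destruct (Rcase_abs x) as [Hx | Hx].
  - rewrite Rabs_left, sinh_opp by exact Hx; ring.
  - rewrite Rabs_pos_eq by lra; reflexivity.
Qed.

Lemma antitone_of_deriv_nonpos (f f' : R -> R) (a : R) :
  (forall u, a <= u -> derivable_pt_lim f u (f' u)) ->
  (forall u, a <= u -> f' u <= 0) ->
  forall u v, a <= u -> u <= v -> f v <= f u.
Proof.
  intros Hder Hneg u v Hau Huv.
  destruct (Req_dec u v) as [<- | Hne]; [lra |].
  destruct (MVT_cor2 f f' u v) as [w [Hw Hwin]]; [lra | |].
  - intros w Hw; apply Hder; lra.
  - pose proof (Hneg w ltac:(lra)); nra.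
Qed.

Lemma sinh_ge_id (u : R) : 0 <= u -> u <= sinh u.
Proof.
  intro Hu.
  pose proof (antitone_of_deriv_nonpos (fun v => v - sinh v) (fun v => 1 - cosh v) 0)
    as Hanti.
  assert (H : u - sinh u <= 0 - sinh 0).
  { apply Hanti; [| intros v _; pose proof (cosh_ge_1 v); lra | lra | exact Hu].
    intros v _; apply derivable_pt_lim_minus;
      [apply derivable_pt_lim_id | apply derivable_pt_lim_sinh]. }
  rewrite sinh_0 in H; lra.
Qed.

Lemma cos_eq_1_inv (y : R) : cos y = 1 -> exists k : Z, y = 2 * PI * IZR k.
Proof.
  intro Hy.
  replace y with (2 * (y / 2)) in Hy by field.
  rewrite cos_2a_sin in Hy.
  destruct (sin_eq_0_0 (y / 2)) as [k Hk]; [nra |].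
  exists k; lra.
Qed.

Definition Wt_profile (b c u : R) : R :=
  b * sinh u / (2 * (cosh u - c)) - / 2 * ln (2 * (cosh u - c)).

Definition Wt_profile_deriv (b c u : R) : R :=
  (b * (1 - c * cosh u) - sinh u * (cosh u - c)) / (2 * (cosh u - c) ^ 2).

Lemma derivable_pt_lim_Wt_profile (b c u : R) : 0 < cosh u - c ->
  derivable_pt_lim (Wt_profile b c) u (Wt_profile_deriv b c u).
Proof.
  intro Hpos.
  assert (Hden : derivable_pt_lim (fun v => 2 * (cosh v - c)) u (2 * (sinh u - 0))).
  { apply (derivable_pt_lim_scal (fun v => cosh v - c)).
    apply (derivable_pt_lim_minus cosh (fct_cte c));
      [apply derivable_pt_lim_cosh | apply derivable_pt_lim_const]. }
  assert (Hquot : derivable_pt_lim (fun v => b * sinh v / (2 * (cosh v - c))) u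
     ((b * cosh u * (2 * (cosh u - c)) - 2 * (sinh u - 0) * (b * sinh u))
      / (2 * (cosh u - c))²)).
  { apply (derivable_pt_lim_div (fun v => b * sinh v) (fun v => 2 * (cosh v - c)));
      [| exact Hden | lra].
    apply (derivable_pt_lim_scal sinh), derivable_pt_lim_sinh. }
  assert (Hlog : derivable_pt_lim (fun v => / 2 * ln (2 * (cosh v - c))) u
     (/ 2 * (/ (2 * (cosh u - c)) * (2 * (sinh u - 0))))).
  { apply (derivable_pt_lim_scal (fun v => ln (2 * (cosh v - c)))).
    apply (derivable_pt_lim_comp (fun v => 2 * (cosh v - c)) ln); [exact Hden |].
    apply derivable_pt_lim_ln; lra. }
  pose proof (derivable_pt_lim_minus _ _ _ _ _ Hquot Hlog) as Hder.
  refine (eq_ind _ (derivable_pt_lim (Wt_profile b c) u) Hder _ _).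
  assert (Hsinh2 : sinh u * sinh u = cosh u * cosh u - 1)
    by (pose proof (cosh_sqr_sub_sinh_sqr u); lra).
  unfold Wt_profile_deriv, Rsqr.
  replace (2 * (sinh u - 0) * (b * sinh u)) with (2 * b * (sinh u * sinh u)) by ring.
  rewrite Hsinh2; field; lra.
Qed.

Lemma Rabs_one_sub_mul_cosh_le (c u : R) : -1 <= c <= 1 ->
  Rabs (1 - c * cosh u) <= cosh u - c.
Proof.
  intro Hc.
  pose proof (cosh_sqr_sub_sinh_sqr u); pose proof (cosh_ge_1 u).
  (* (cosh u - c)² - (1 - c cosh u)² = sinh² u (1 - c²) *)
  apply Rabs_le; split; nra.
Qed.

Lemma Wt_profile_deriv_nonpos (b c u : R) : -1 <= c <= 1 -> Rabs b <= u ->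
  0 < cosh u - c -> Wt_profile_deriv b c u <= 0.
Proof.
  intros Hc Hb Hpos.
  pose proof (Rabs_one_sub_mul_cosh_le c u Hc) as Hle.
  assert (Hu : 0 <= u) by (pose proof (Rabs_pos b); lra).
  pose proof (sinh_ge_id u Hu).
  assert (Hnum : b * (1 - c * cosh u) <= sinh u * (cosh u - c)).
  { apply Rle_trans with (Rabs b * Rabs (1 - c * cosh u)).
    - rewrite <- Rabs_mult; apply RRle_abs.
    - pose proof (Rabs_pos b); pose proof (Rabs_pos (1 - c * cosh u)); nra. }
  unfold Wt_profile_deriv, Rdiv.
  assert (0 < / (2 * (cosh u - c) ^ 2)) by (apply Rinv_0_lt_compat; nra).
  nra.
Qed.

Lemma Wt_profile_antitone (b c s : R) : -1 <= c <= 1 -> Rabs b <= s ->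
  (forall u, s <= u -> 0 < cosh u - c) ->
  forall u v, s <= u -> u <= v -> Wt_profile b c v <= Wt_profile b c u.
Proof.
  intros Hc Hb Hpos.
  apply (antitone_of_deriv_nonpos _ (Wt_profile_deriv b c)).
  - intros u Hu; apply derivable_pt_lim_Wt_profile, Hpos, Hu.
  - intros u Hu; apply Wt_profile_deriv_nonpos; [exact Hc | lra | apply Hpos, Hu].
Qed.

Lemma cosh_sub_cos_pos (x y u : R) : ~ exceptional x y -> Rabs x <= u ->
  0 < cosh u - cos y.
Proof.
  intros Hxy Hu.
  pose proof (COS_bound y) as Hcos.
  destruct (Rlt_or_le 0 u) as [Hu0 | Hu0].
  - pose proof (cosh_gt_1 u Hu0); lra.
  - assert (Hx : x = 0).
    { destruct (Req_dec x 0) as [Hx | Hx]; [exact Hx |].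
      pose proof (Rabs_pos_lt x Hx); lra. }
    assert (Hcos1 : cos y <> 1)
      by (intro H; apply Hxy; split; [exact Hx | exact (cos_eq_1_inv y H)]).
    replace u with 0 by (rewrite Hx, Rabs_R0 in Hu; lra).
    rewrite cosh_0; lra.
Qed.

Lemma Wt_sub_half_t (alpha t x y : R) :
  Wt alpha t x y - t / 2
  = Wt_profile (alpha * Rabs x) (cos y) (Rabs x + t) + (1 - alpha) / 2 * Rabs x.
Proof. unfold Wt, Wt_profile; ring. Qed.

Lemma Wt_0 (alpha x y : R) : 0 < cosh x - cos y -> Wt alpha 0 x y = W alpha x y.
Proof.
  intro Hpos.
  unfold Wt, W; rewrite Rplus_0_r, cosh_Rabs.
  replace (alpha * Rabs x * sinh (Rabs x)) with (alpha * (x * sinh x))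
    by (rewrite <- Rabs_mul_sinh_Rabs; ring).
  field; lra.
Qed.

Theorem mainTheorem6 (alpha : R) (halpha : -1 <= alpha <= 1) (x y : R)
    (hxy : ~ exceptional x y) :
  (forall t1 t2 : R, 0 <= t1 -> t1 <= t2 ->
      Wt alpha t2 x y - t2 / 2 <= Wt alpha t1 x y - t1 / 2)
  /\ Wt alpha 0 x y - 0 / 2 = W alpha x y
  /\ (forall t : R, 0 <= t -> W alpha x y >= Wt alpha t x y - t / 2).
Proof.
  assert (Hpos : forall u, Rabs x <= u -> 0 < cosh u - cos y)
    by (intros u; apply cosh_sub_cos_pos, hxy).
  assert (Hanti : forall t1 t2, 0 <= t1 -> t1 <= t2 ->
      Wt alpha t2 x y - t2 / 2 <= Wt alpha t1 x y - t1 / 2).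
  { intros t1 t2 Ht1 Ht12; rewrite !Wt_sub_half_t.
    apply Rplus_le_compat_r, (Wt_profile_antitone _ _ (Rabs x));
      [apply COS_bound | | exact Hpos | lra | lra].
    rewrite Rabs_mult, Rabs_Rabsolu; pose proof (Rabs_pos x); pose proof (Rabs_pos alpha).
    assert (Rabs alpha <= 1) by (apply Rabs_le; split; lra); nra. }
  assert (HW0 : Wt alpha 0 x y - 0 / 2 = W alpha x y).
  { rewrite Wt_0 by (rewrite <- cosh_Rabs; apply Hpos, Rle_refl); field. }
  split; [exact Hanti | split; [exact HW0 |]].
  intros t Ht; rewrite <- HW0; apply Rle_ge, Hanti; lra.
Qed.
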